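(* Let $M$ be a collectible reward decomposition MDP with initial state $s_0$, discount factor $\gamma\in(0,1)$ and $n$ rewards located at states $s_1,\dots,s_n$, and let $o_1,\dots,o_n$ be options where $o_j$ moves the agent along a shortest path to $s_j$ and terminates upon collecting the reward there; let $V_j(i)$ denote the value (discounted return $\gamma^{\text{time to reach } s_j}$) of following $o_j$ from state $s_i$. Define a graph $G$ whose nodes are $s_0,s_1,\dots,s_n$ and in which the edge $e_{i,j}$ has length $d_{i,j}=\log_\gamma\big(V_j(i)\big)$. Then an optimal policy for $M$ (maximizing the expected discounted sum of collected rewards) can be derived by solving the RD-TSP on $G$: following, in the order given by an optimal RD-TSP solution, the options $o_{i_1},o_{i_2},\dots,o_{i_n}$ yields an optimal policy for $M$.
   Context: A collectible reward decomposition MDP is an MDP $M$ with deterministic dynamics whose reward is $R_M=\sum_{i=1}^n R_i$, where each $R_i$ is a collectible reward: $R_i(s)=1$ iff $s=s_i$ for a particular state $s_i$ and $0$ otherwise, and each reward can be collected only once (the set of already collected rewards is part of the state). The agent starts at $s_0$ and maximizes the discounted return with discount $\gamma$. The RD-TSP (reward discounted traveling salesman problem) on an undirected graph with a start node $i_0=s_0$, nodes $1,\dots,n$ and edge lengths $d_{i,j}$ asks for a permutation $(i_1,\dots,i_n)$ of $\{1,\dots,n\}$ maximizing $\sum_{j=0}^{n-1}\gamma^{\sum_{t=0}^{j} d_{i_t,i_{t+1}}}$. *)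

From mathcomp Require Import all_boot all_order all_fingroup all_algebra.
From mathcomp Require Import all_classical all_reals all_analysis.
Import Order.TTheory GRing.Theory Num.Theory.
Set Implicit Arguments. Unset Strict Implicit. Unset Printing Implicit Defensive.
Local Open Scope ring_scope.

Section CollectibleMDP.
Variables (R : realType) (S : eqType) (A : Type).
Variable step : S -> A -> S.

Fixpoint traj (x : S) (alpha : nat -> A) (t : nat) : S :=
  if t is u.+1 then step (traj x alpha u) (alpha u) else x.

Fixpoint otraj (o : S -> A) (x : S) (t : nat) : S :=
  if t is u.+1 then let y := otraj o x u in step y (o y) else x.

Definition reachable (x y : S) : Prop := exists alpha k, traj x alpha k = y.

(* the state sequence xs visits y at time t for the first time, i.e. a
   collectible reward located at y (not yet collected) is collected at t *)
Definition first_hit (xs : nat -> S) (y : S) (t : nat) : bool :=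
  (xs t == y) && [forall u : 'I_t, xs u != y].

Definition disc_return (gamma : R) (n : nat) (sr : 'I_n -> S) (xs : nat -> S) : R :=
  limn (fun N => \sum_(t < N) gamma ^+ t * (\sum_(i < n) (first_hit xs (sr i) t)%:R)).

Definition mdp_value (gamma : R) (n : nat) (sr : 'I_n -> S) (s0 : S)
  (alpha : nat -> A) : R := disc_return gamma sr (traj s0 alpha).

Definition shortest_path_option (y : S) (o : S -> A) : Prop :=
  forall x, reachable x y ->
    exists m, otraj o x m = y /\
      forall alpha k, traj x alpha k = y -> (m <= k)%N.

(* value V(x) of the option o (targeting y) from x: discounted return of
   the single reward at y, collected upon arrival, where the option terminates *)
Definition option_value (gamma : R) (y : S) (o : S -> A) (x : S) : R :=
  limn (fun N => \sum_(t < N) gamma ^+ t * (first_hit (otraj o x) y t)%:R).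

Definition log_base (gamma x : R) : R := ln x / ln gamma.

Definition edge_len (gamma : R) (n : nat) (sr : 'I_n -> S) (o : 'I_n -> S -> A)
  (x : S) (j : 'I_n) : R := log_base gamma (option_value gamma (sr j) (o j) x).

(* RD-TSP objective for the tour s0 -> sr (p 0) -> ... -> sr (p (n-1)):
   sum_{j<n} gamma ^ (sum_{t<=j} d_{i_t, i_{t+1}}) *)
Definition tour_prev (n : nat) (sr : 'I_n -> S) (s0 : S) (p : 'S_n) (t : nat) : S :=
  nth s0 (s0 :: [seq sr (p i) | i <- enum 'I_n]) t.

Definition rdtsp_obj (gamma : R) (n : nat) (sr : 'I_n -> S) (o : 'I_n -> S -> A)
  (s0 : S) (p : 'S_n) : R :=
  \sum_(j < n) powR gamma
     (\sum_(t < n | (t <= j)%N) edge_len gamma sr o (tour_prev sr s0 p t) (p t)).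

(* execution of the options o_{p 0}, o_{p 1}, ..., o_{p (n-1)} in that order:
   the pair (current state, index k of the option currently executed); option
   o_{p k} terminates when its target sr (p k) is reached; after the last
   option terminates the (irrelevant) default action a0 is used *)
Definition option_list (n : nat) (sr : 'I_n -> S) (o : 'I_n -> S -> A) (p : 'S_n) :=
  [seq (sr (p i), o (p i)) | i <- enum 'I_n].

Fixpoint exec_opts (n : nat) (sr : 'I_n -> S) (o : 'I_n -> S -> A) (p : 'S_n)
  (s0 : S) (a0 : A) (t : nat) : S * nat :=
  if t is u.+1 then
    let (x, k) := exec_opts sr o p s0 a0 u in
    if (k < n)%N then
      let (y, oj) := nth (s0, fun _ => a0) (option_list sr o p) k in
      let x' := step x (oj x) in (x', if x' == y then k.+1 else k)
    else (step x a0, k)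
  else (s0, 0%N).

Definition opts_action (n : nat) (sr : 'I_n -> S) (o : 'I_n -> S -> A) (p : 'S_n)
  (s0 : S) (a0 : A) (t : nat) : A :=
  let (x, k) := exec_opts sr o p s0 a0 t in
  if (k < n)%N then (nth (s0, fun _ => a0) (option_list sr o p) k).2 x else a0.

End CollectibleMDP.

From mathcomp Require Import all_boot all_order all_fingroup all_algebra.
From mathcomp Require Import all_classical all_reals all_analysis.
Import Order.TTheory GRing.Theory Num.Theory.
Import numFieldNormedType.Exports.
Local Open Scope ring_scope.
Set Implicit Arguments. Unset Strict Implicit. Unset Printing Implicit Defensive.

(* Since the dynamics are deterministic and a shortest-path option reaching
   s_j from x takes exactly m steps with gamma ^ m = V_j(x), the edge length
   d_{x,j} is the distance from x to s_j.  Any behaviour collects its rewards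
   in some order q, and the reward collected k-th arrives no earlier than the
   length of the first k legs of the tour q; so every partial discounted return
   is at most the RD-TSP objective of q, hence of the optimal tour p.  Following
   the options along p collects the k-th reward exactly at that length, so its
   return attains the objective of p. *)

Lemma sorting_perm (n : nat) (k : 'I_n -> nat) : injective k ->
  exists q : 'S_n, forall i j : 'I_n, (i < j)%N -> (k (q i) < k (q j))%N.
Proof.
move=> k_inj; set le_k := fun i j : 'I_n => (k i <= k j)%N.
have /tuple_permP[q sortE] : perm_eq (sort le_k (enum 'I_n)) (ord_tuple n).
  by rewrite perm_sort perm_refl.
have nth_sort (i : 'I_n) : nth i (sort le_k (enum 'I_n)) i = q i.
  by rewrite sortE /= (nth_map i) ?size_enum_ord // nth_ord_enum tnth_ord_tuple.
exists q => i j ij; rewrite ltn_neqAle (inj_eq k_inj) (inj_eq (@perm_inj _ q)).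
rewrite neq_ltn ij /= -!nth_sort (set_nth_default i j) ?size_sort ?size_enum_ord //.
apply: (sorted_ltn_nth (leT := le_k)) ij; rewrite ?inE ?size_sort ?size_enum_ord //.
- by move=> a b c; apply: leq_trans.
- by apply: sort_sorted => a b; apply: leq_total.
Qed.

Section FirstHit.
Variables (S : eqType) (xs : nat -> S) (y : S).

Lemma first_hit_uniq t t' : first_hit xs y t -> first_hit xs y t' -> t = t'.
Proof.
move=> /andP[/eqP xt /forallP before_t] /andP[/eqP xt' /forallP before_t'].
case: (ltngtP t t') => // [lt|gt].
- by move: (before_t' (Ordinal lt)); rewrite /= xt eqxx.
- by move: (before_t (Ordinal gt)); rewrite /= xt' eqxx.
Qed.

Lemma first_hit_le t0 : xs t0 = y -> exists2 t, (t <= t0)%N & first_hit xs y t.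
Proof.
move=> xt0; have hit : exists t, xs t == y by exists t0; rewrite xt0.
case: (ex_minnP hit) => t /eqP xt t_min; exists t; first by apply: t_min; rewrite xt0.
rewrite /first_hit xt eqxx; apply/forallP => u; apply/eqP => xu.
by have := t_min u; rewrite xu eqxx leqNgt ltn_ord => /(_ isT).
Qed.

Lemma first_hitE m : xs m = y -> (forall s, (s < m)%N -> xs s != y) ->
  forall t, first_hit xs y t = (t == m).
Proof.
move=> xm before_m t; rewrite /first_hit; case: (ltngtP t m) => [lt|gt|->].
- by rewrite (negbTE (before_m _ lt)).
- by apply/andP => -[_ /forallP /(_ (Ordinal gt))]; rewrite /= xm eqxx.
- by rewrite xm eqxx; apply/forallP => u; apply: before_m.
Qed.

End FirstHit.

Section DiscountedHits.
Variables (R : realType) (gamma : R) (S : eqType).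

Definition hit_sum (xs : nat -> S) (y : S) (N : nat) : R :=
  \sum_(t < N) gamma ^+ t * (first_hit xs y t)%:R.

Definition return_sum (n : nat) (sr : 'I_n -> S) (xs : nat -> S) (N : nat) : R :=
  \sum_(t < N) gamma ^+ t * (\sum_(i < n) (first_hit xs (sr i) t)%:R).

Lemma return_sumE n (sr : 'I_n -> S) xs N :
  return_sum sr xs N = \sum_(i < n) hit_sum xs (sr i) N.
Proof. by rewrite /return_sum exchange_big; apply: eq_bigr => t _; rewrite mulr_sumr. Qed.

Lemma hit_sum_pick xs y N : hit_sum xs y N =
  if [pick t : 'I_N | first_hit xs y t] is Some t then gamma ^+ t else 0.
Proof.
rewrite /hit_sum; case: pickP => [t hit_t|no_hit]; last first.
  by rewrite big1 // => i _; rewrite no_hit mulr0.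
rewrite (bigD1 t) //= hit_t mulr1 big1 ?addr0 // => i ne_it.
case hit_i: (first_hit xs y i); last by rewrite mulr0.
by move: ne_it; rewrite (val_inj (first_hit_uniq hit_i hit_t)) eqxx.
Qed.

Lemma hit_sum_first xs y m N : (forall t, first_hit xs y t = (t == m)) ->
  (m < N)%N -> hit_sum xs y N = gamma ^+ m.
Proof.
move=> hitE mN; rewrite hit_sum_pick; case: pickP => [t|/(_ (Ordinal mN))].
- by rewrite hitE => /eqP ->.
- by rewrite hitE eqxx.
Qed.

Hypothesis gamma01 : 0 <= gamma <= 1.

Lemma hit_sum_ge xs y t0 N : xs t0 = y -> (t0 < N)%N -> gamma ^+ t0 <= hit_sum xs y N.
Proof.
case/andP: gamma01 => g0 g1 xt0 t0N; have [t le_t0 hit_t] := first_hit_le xt0.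
rewrite hit_sum_pick; case: pickP => [t' hit_t'|/(_ (Ordinal (leq_ltn_trans le_t0 t0N)))].
- by rewrite -(first_hit_uniq hit_t hit_t'); apply: ler_wiXn2l.
- by rewrite hit_t.
Qed.

Lemma hit_sum_le1 xs y N : hit_sum xs y N <= 1.
Proof.
case/andP: gamma01 => g0 g1; rewrite hit_sum_pick.
by case: pickP => [t _|_]; [apply: exprn_ile1 | apply: ler01].
Qed.

Section Return.
Variables (n : nat) (sr : 'I_n -> S) (xs : nat -> S).

Lemma return_sum_nondecreasing : nondecreasing_seq (return_sum sr xs).
Proof.
apply/nondecreasing_seqP => N; rewrite /return_sum big_ord_recr /= lerDl.
by apply: mulr_ge0; [apply: exprn_ge0; case/andP: gamma01 | apply: sumr_ge0].
Qed.

Lemma return_sum_cvgn : cvgn (return_sum sr xs).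
Proof.
apply: nondecreasing_is_cvgn return_sum_nondecreasing _; exists n%:R => _ [N _ <-].
rewrite return_sumE -[n in n%:R]card_ord -sum1_card natr_sum.
by apply: ler_sum => i _; apply: hit_sum_le1.
Qed.

Lemma disc_return_le B : (forall N, return_sum sr xs N <= B) -> disc_return gamma sr xs <= B.
Proof. by move=> le_B; apply: limr_le return_sum_cvgn _; apply: nearW. Qed.

Lemma return_sum_le_disc_return N : return_sum sr xs N <= disc_return gamma sr xs.
Proof. exact: nondecreasing_cvgn_le return_sum_nondecreasing return_sum_cvgn N. Qed.

End Return.

End DiscountedHits.

Section ShortestPathOptions.
Variables (R : realType) (S : eqType) (A : Type) (step : S -> A -> S).

Lemma otraj_traj (o : S -> A) x t :
  otraj step o x t = traj step x (fun u => o (otraj step o x u)) t.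
Proof. by elim: t => //= t ->. Qed.

Lemma traj_addn x alpha a k :
  traj step x alpha (a + k) = traj step (traj step x alpha a) (fun u => alpha (a + u)) k.
Proof. by elim: k => [|k IHk]; rewrite ?addn0 // addnS /= IHk. Qed.

Lemma option_value_first_hit (gamma : R) y o x m :
  (forall t, first_hit (otraj step o x) y t = (t == m)) ->
  option_value step gamma y o x = gamma ^+ m.
Proof.
move=> hitE; apply: lim_near_cst => //; near=> N.
apply: (hit_sum_first gamma hitE); near: N; exact: nbhs_infty_gt.
Unshelve. all: by end_near.
Qed.

Lemma log_base_expr (gamma : R) m : 0 < gamma < 1 -> log_base gamma (gamma ^+ m) = m%:R.
Proof.
move=> gamma01; have ln_neq0 : ln gamma != 0 by rewrite lt_eqF // ln_lt0.
case/andP: gamma01 => g0 _.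
by rewrite /log_base lnXn // -(mulr_natr (ln gamma)) mulrAC divff // mul1r.
Qed.

Lemma edge_len_shortest (gamma : R) n (sr : 'I_n -> S) (o : 'I_n -> S -> A) x j :
  0 < gamma < 1 -> shortest_path_option step (sr j) (o j) -> reachable step x (sr j) ->
  exists m, [/\ edge_len step gamma sr o x j = m%:R,
    otraj step (o j) x m = sr j,
    forall s, (s < m)%N -> otraj step (o j) x s != sr j &
    forall alpha k, traj step x alpha k = sr j -> (m <= k)%N].
Proof.
move=> gamma01 sp_j reach_x; have [m [xm m_min]] := sp_j x reach_x.
have before_m s : (s < m)%N -> otraj step (o j) x s != sr j.
  move=> sm; apply/eqP => xs_eq.
  have := m_min (fun u => o j (otraj step (o j) x u)) s; rewrite -otraj_traj.
  by move=> /(_ xs_eq); rewrite leqNgt sm.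
exists m; split => //.
by rewrite /edge_len (option_value_first_hit _ (first_hitE xm before_m)) log_base_expr.
Qed.

End ShortestPathOptions.

Section Tours.
Variables (R : realType) (S : eqType) (A : Type) (step : S -> A -> S).
Variables (gamma : R) (n : nat) (s0 : S) (sr : 'I_n -> S) (o : 'I_n -> S -> A).

Definition tour_len (q : 'S_n) (k : nat) : R :=
  \sum_(t < n | (t < k)%N) edge_len step gamma sr o (tour_prev sr s0 q t) (q t).

Lemma rdtsp_objE q :
  rdtsp_obj step gamma sr o s0 q = \sum_(j < n) powR gamma (tour_len q j.+1).
Proof. by apply: eq_bigr => j _; congr powR; apply: eq_bigl => t; rewrite ltnS. Qed.

Lemma tour_len0 q : tour_len q 0 = 0.
Proof. exact: big_pred0. Qed.

Lemma tour_lenS q (k : 'I_n) :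
  tour_len q k.+1 = tour_len q k + edge_len step gamma sr o (tour_prev sr s0 q k) (q k).
Proof.
rewrite /tour_len (bigD1 k) //= addrC; congr (_ + _).
by apply: eq_bigl => t; rewrite ltnS -(inj_eq val_inj) andbC -ltn_neqAle.
Qed.

Lemma tour_prevS q (k : 'I_n) : tour_prev sr s0 q k.+1 = sr (q k).
Proof. by rewrite /tour_prev /= (nth_map k) ?size_enum_ord // nth_ord_enum. Qed.

Lemma reachable_tour_prev q (k : 'I_n) j :
  (forall j, reachable step s0 (sr j)) -> (forall i j, reachable step (sr i) (sr j)) ->
  reachable step (tour_prev sr s0 q k) (sr j).
Proof.
by case: k => [[|k] kn] reach_s0 reach_sr //=; rewrite (tour_prevS q (Ordinal (ltnW kn))).
Qed.

End Tours.

Arguments tour_lenS {R S A step gamma n s0 sr o}.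
Arguments tour_prevS {S n s0 sr}.

Section RDTSPBounds.
Variables (R : realType) (S : eqType) (A : Type) (step : S -> A -> S).
Variables (gamma : R) (n : nat) (s0 : S) (sr : 'I_n -> S) (o : 'I_n -> S -> A).
Hypothesis gamma01 : 0 < gamma < 1.
Hypothesis reach_s0 : forall j, reachable step s0 (sr j).
Hypothesis reach_sr : forall i j, reachable step (sr i) (sr j).
Hypothesis o_shortest : forall j, shortest_path_option step (sr j) (o j).
Hypothesis sr_inj : injective sr.

Let gamma_ge0_le1 : 0 <= gamma <= 1.
Proof. by case/andP: gamma01 => /ltW -> /ltW. Qed.

Lemma tour_leg_shortest q (k : 'I_n) :
  exists m, [/\ edge_len step gamma sr o (tour_prev sr s0 q k) (q k) = m%:R,
    otraj step (o (q k)) (tour_prev sr s0 q k) m = sr (q k),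
    forall s, (s < m)%N -> otraj step (o (q k)) (tour_prev sr s0 q k) s != sr (q k) &
    forall alpha t, traj step (tour_prev sr s0 q k) alpha t = sr (q k) -> (m <= t)%N].
Proof.
exact: edge_len_shortest gamma01 (@o_shortest _) (reachable_tour_prev _ _ _ reach_s0 reach_sr).
Qed.

Section Upper.
Variables (alpha : nat -> A) (N : nat).
Let xs := traj step s0 alpha.

(* rewards not collected before N get the distinct dummy times N + i *)
Definition hit_time (i : 'I_n) : nat :=
  if [pick t : 'I_N | first_hit xs (sr i) t] is Some t then val t else (N + i)%N.

Lemma hit_time_hit i : (hit_time i < N)%N -> xs (hit_time i) = sr i.
Proof.
rewrite /hit_time; case: pickP => [t /andP[/eqP -> _] //|_].
by rewrite ltnNge leq_addr.
Qed.

Lemma hit_sum_hit_time i :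
  hit_sum gamma xs (sr i) N = if (hit_time i < N)%N then gamma ^+ hit_time i else 0.
Proof.
rewrite hit_sum_pick /hit_time; case: pickP => [t _|_]; first by rewrite ltn_ord.
by rewrite ltnNge leq_addr.
Qed.

Lemma hit_time_inj : injective hit_time.
Proof.
move=> i j; rewrite /hit_time.
case: pickP => [t /andP[/eqP xt _]|_]; case: pickP => [t' /andP[/eqP xt' _]|_].
- by move=> tt'; apply: sr_inj; rewrite -xt -xt' tt'.
- by move=> tE; have := ltn_ord t; rewrite tE ltnNge leq_addr.
- by move=> tE; have := ltn_ord t'; rewrite -tE ltnNge leq_addr.
- by move/eqP; rewrite eqn_add2l => /eqP /val_inj.
Qed.

Lemma tour_len_le_hit_time (q : 'S_n) :
  (forall i j : 'I_n, (i < j)%N -> (hit_time (q i) < hit_time (q j))%N) ->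
  forall j : 'I_n, (hit_time (q j) < N)%N ->
    tour_len step gamma s0 sr o q j.+1 <= (hit_time (q j))%:R.
Proof.
move=> q_sorted [j jn]; elim: j jn => [|j IHj] jn /= hitN.
  have [m [leg_m _ _ m_min]] := tour_leg_shortest q (Ordinal jn).
  rewrite (tour_lenS q (Ordinal jn)) tour_len0 add0r leg_m ler_nat.
  exact/m_min/hit_time_hit.
set i := Ordinal (ltnW jn); have lt_ij := q_sorted i (Ordinal jn) (ltnSn j).
have [m [leg_m _ _ m_min]] := tour_leg_shortest q (Ordinal jn).
rewrite (tour_lenS q (Ordinal jn)) leg_m -(subnKC (ltnW lt_ij)) natrD.
apply: lerD; first exact: IHj (ltn_trans lt_ij hitN).
rewrite ler_nat; apply: (m_min (fun u => alpha (hit_time (q i) + u))).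
rewrite /= (tour_prevS q i) -(hit_time_hit (ltn_trans lt_ij hitN)) /xs -traj_addn.
by rewrite subnKC ?(ltnW lt_ij) //; apply: hit_time_hit.
Qed.

Lemma return_sum_le_rdtsp :
  exists q, return_sum gamma sr xs N <= rdtsp_obj step gamma sr o s0 q.
Proof.
have [q q_sorted] := sorting_perm hit_time_inj; exists q.
rewrite return_sumE rdtsp_objE (reindex_inj (@perm_inj _ q)) /=.
apply: ler_sum => j _; rewrite hit_sum_hit_time; case: ifP => [hitN|_]; last exact: powR_ge0.
rewrite -powR_mulrn; last by case/andP: gamma_ge0_le1.
by apply: ger_powR (tour_len_le_hit_time q_sorted hitN); case/andP: gamma01 => -> /ltW.
Qed.

End Upper.

Section Lower.
Hypothesis sr_neq_s0 : forall i, sr i != s0.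
Variables (p : 'S_n) (a0 : A).
Let ex := exec_opts step sr o p s0 a0.
Let xs := traj step s0 (opts_action step sr o p s0 a0).

Lemma traj_opts_action t : xs t = (ex t).1.
Proof.
rewrite /xs /ex; elim: t => //= t ->; rewrite /opts_action.
by case: exec_opts => x k /=; case: ifP => // _; case: nth.
Qed.

Lemma nth_option_list (k : 'I_n) :
  nth (s0, fun _ => a0) (option_list sr o p) k = (sr (p k), o (p k)).
Proof. by rewrite /option_list (nth_map k) ?size_enum_ord // nth_ord_enum. Qed.

Lemma tour_prev_neq (k : 'I_n) : tour_prev sr s0 p k != sr (p k).
Proof.
case: k => [[|k] kn]; first by rewrite eq_sym sr_neq_s0.
rewrite (tour_prevS p (Ordinal (ltnW kn))) (inj_eq sr_inj) (inj_eq (@perm_inj _ p)).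
by rewrite -(inj_eq val_inj) /= neq_ltn ltnSn.
Qed.

Lemma exec_opts_leg (k : 'I_n) T : ex T = (tour_prev sr s0 p k, val k) ->
  exists m, ex (T + m) = (sr (p k), k.+1) /\
    edge_len step gamma sr o (tour_prev sr s0 p k) (p k) = m%:R.
Proof.
move=> exT; have [m [leg_m xm before_m _]] := tour_leg_shortest p k.
exists m; split => //.
have m_gt0 : (0 < m)%N.
  by rewrite lt0n; apply: contraNneq (tour_prev_neq k) => m0; rewrite -xm m0.
have inside s : (s < m)%N -> ex (T + s) = (otraj step (o (p k)) (tour_prev sr s0 p k) s, val k).
  elim: s => [|s IHs] sm; first by rewrite addn0.
  rewrite addnS /ex /= -/ex IHs ?(ltnW sm) // ltn_ord nth_option_list /=.
  by rewrite (negbTE (before_m _ sm)).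
move: xm; rewrite -(prednK m_gt0) addnS /ex /= -/ex inside ?prednK // ltn_ord.
by rewrite nth_option_list /= => ->; rewrite eqxx.
Qed.

Lemma exec_opts_tour k : (k <= n)%N ->
  exists T, ex T = (tour_prev sr s0 p k, k) /\ tour_len step gamma s0 sr o p k = T%:R.
Proof.
elim: k => [|k IHk] kn; first by exists 0%N; rewrite tour_len0.
have [T [exT lenT]] := IHk (ltnW kn).
have [m [exTm leg_m]] := exec_opts_leg (k := Ordinal kn) exT.
exists (T + m)%N; rewrite exTm (tour_prevS p (Ordinal kn)).
by rewrite (tour_lenS p (Ordinal kn)) lenT leg_m natrD.
Qed.

Lemma rdtsp_le_return_sum :
  exists N, rdtsp_obj step gamma sr o s0 p <= return_sum gamma sr xs N.
Proof.
have /fin_all_exists[T T_spec] (j : 'I_n) :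
    exists T, xs T = sr (p j) /\ tour_len step gamma s0 sr o p j.+1 = T%:R.
  have [T [exT lenT]] := exec_opts_tour (ltn_ord j).
  by exists T; rewrite traj_opts_action exT (tour_prevS p j).
exists (\max_j T j).+1.
rewrite return_sumE rdtsp_objE [X in _ <= X](reindex_inj (@perm_inj _ p)) /=.
apply: ler_sum => j _; have [xT ->] := T_spec j.
rewrite powR_mulrn; last by case/andP: gamma_ge0_le1.
by apply: hit_sum_ge xT _ => //; rewrite ltnS (leq_bigmax j).
Qed.

End Lower.
End RDTSPBounds.

Theorem proposition1 (R : realType) (S : eqType) (A : Type)
  (step : S -> A -> S) (gamma : R) (n : nat) (s0 : S) (sr : 'I_n -> S)
  (o : 'I_n -> S -> A) (p : 'S_n) (a0 : A) :
  0 < gamma < 1 ->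
  injective sr ->
  (forall i, sr i != s0) ->
  (* every reward location is reachable from s0 and from every reward location *)
  (forall j, reachable step s0 (sr j)) ->
  (forall i j, reachable step (sr i) (sr j)) ->
  (* o_j moves the agent along a shortest path to s_j *)
  (forall j, shortest_path_option step (sr j) (o j)) ->
  (* p is an optimal solution of the RD-TSP on G *)
  (forall q : 'S_n, rdtsp_obj step gamma sr o s0 q <= rdtsp_obj step gamma sr o s0 p) ->
  (* following o_{p 0}, ..., o_{p (n-1)} is optimal among all behaviours *)
  forall alpha : nat -> A,
    mdp_value step gamma sr s0 alpha
      <= mdp_value step gamma sr s0 (opts_action step sr o p s0 a0).
Proof.
move=> gamma01 sr_inj sr_neq_s0 reach_s0 reach_sr o_shortest p_opt alpha.
have gamma_ge0_le1 : 0 <= gamma <= 1 by case/andP: gamma01 => /ltW -> /ltW.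
apply: (@le_trans _ _ (rdtsp_obj step gamma sr o s0 p)).
  apply: disc_return_le => // N.
  have [q le_q] := return_sum_le_rdtsp gamma01 reach_s0 reach_sr o_shortest sr_inj alpha N.
  exact: le_trans le_q (p_opt q).
have [N le_N] :=
  rdtsp_le_return_sum gamma01 reach_s0 reach_sr o_shortest sr_inj sr_neq_s0 p a0.
exact: le_trans le_N (return_sum_le_disc_return gamma_ge0_le1 _ _ N).
Qed.
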